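(* Let $\alpha>0$, $\alpha\neq1$. For every unitary $U\in\mathcal{U}(d)$, $H_\alpha(U)=0$ if and only if $U$ belongs to the Clifford group $\mathcal{C}_n(d_L)$.
   Context: Let $d_L\ge 2$, $n\ge1$, $d=d_L^n$. On $\mathbb{C}^{d_L}$ with computational basis $\{|k\rangle\}_{k\in\mathbb{Z}_{d_L}}$, let $Z|k\rangle=\omega^k|k\rangle$, $X|k\rangle=|k+1\rangle$ (mod $d_L$), $\omega=e^{2\pi i/d_L}$, $\tau=-e^{i\pi/d_L}$, $D_{(a_1,a_2)}=\tau^{a_1a_2}X^{a_1}Z^{a_2}$, and for $\mathbf a=\mathbf a_1\oplus\cdots\oplus\mathbf a_n\in\mathbb{Z}_{d_L}^{2n}$ let $D_{\mathbf a}=D_{\mathbf a_1}\otimes\cdots\otimes D_{\mathbf a_n}$ acting on $\mathbb{C}^d$. The Clifford group $\mathcal{C}_n(d_L)$ is the set of unitaries $C$ on $\mathbb{C}^d$ such that for every $\mathbf a$ there exist $s\in\mathbb{Z}_{d_L}$ and $\mathbf a'$ with $CD_{\mathbf a}C^\dagger=\omega^sD_{\mathbf a'}$. For a unitary $U$ let $\mathfrak{C}_{\mathbf{ab}}(U)=\frac1d\operatorname{tr}(D_{\mathbf a}^\dagger UD_{\mathbf b}U^\dagger)$, $\mathfrak{D}_{\mathbf{ab}}(U)=|\mathfrak{C}_{\mathbf{ab}}(U)|^2$, and the $\alpha$-Clifford entropy $H_\alpha(U)=\frac{1}{\alpha-1}\Big(1-\frac{1}{d^2}\sum_{\mathbf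 a,\mathbf b\in\mathbb{Z}_{d_L}^{2n}}\mathfrak{D}_{\mathbf{ab}}(U)^\alpha\Big)$. *)

From HB Require Import structures.
From mathcomp Require Import all_boot all_order all_algebra.
From mathcomp Require Import all_classical all_reals.
From mathcomp Require Import exp trigo.
From mathcomp Require Import complex.
Set Implicit Arguments. Unset Strict Implicit. Unset Printing Implicit Defensive.
Import Order.TTheory GRing.Theory Num.Theory.
Local Open Scope ring_scope.

Section Clifford.
Variables (R : realType) (dL n : nat).

Local Notation C := R[i].

Definition expi (t : R) : C := Complex (cos t) (sin t).
Definition omega : C := expi (2 * pi / dL%:R).
Definition tau : C := - expi (pi / dL%:R).

(* basis labels of C^d, d = dL^n : tuples (k_1,...,k_n) in Z_dL^n *)
Definition basisT := {ffun 'I_n -> 'I_dL}.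
(* phase-space points a = a_1 (+) ... (+) a_n in Z_dL^{2n}, a_j = (a_j1, a_j2) *)
Definition phaseT := {ffun 'I_n -> 'I_dL * 'I_dL}.

Definition dim := #|{: basisT}|.
Definition Mat := 'M[C]_dim.

(* matrix entry <j| D_(a1,a2) |k> on a single qudit:
   D_(a1,a2) = tau^(a1 a2) X^a1 Z^a2, X^a1 Z^a2 |k> = omega^(a2 k) |k + a1 mod dL> *)
Definition D1 (a : 'I_dL * 'I_dL) (j k : 'I_dL) : C :=
  tau ^+ (a.1 * a.2)%N * omega ^+ (a.2 * k)%N *
  ((nat_of_ord j == (k + a.1) %% dL)%N)%:R.

(* D_a = D_{a_1} (x) ... (x) D_{a_n}, written in the product basis *)
Definition Dop (a : phaseT) : Mat :=
  \matrix_(i, j) let x : basisT := enum_val i in let y : basisT := enum_val j in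
    \prod_(l < n) D1 (a l) (x l) (y l).

Definition adj (M : Mat) : Mat := map_mx conjc (M^T).

Definition unitary (U : Mat) : Prop := U *m adj U = 1%:M.

Definition clifford (U : Mat) : Prop :=
  unitary U /\
  forall a : phaseT, exists (s : 'I_dL) (a' : phaseT),
    U *m Dop a *m adj U = omega ^+ s *: Dop a'.

Definition Cab (U : Mat) (a b : phaseT) : C :=
  (dim%:R)^-1 * \tr (adj (Dop a) *m U *m Dop b *m adj U).

Definition Dab (U : Mat) (a b : phaseT) : R := Normc.normc (Cab U a b) ^+ 2.

Definition Halpha (alpha : R) (U : Mat) : R :=
  (alpha - 1)^-1 *
  (1 - (dim%:R ^+ 2)^-1 * \sum_(a : phaseT) \sum_(b : phaseT) Dab U a b `^ alpha).

End Clifford.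

From Pilot Require Import Defs.
From HB Require Import structures.
From mathcomp Require Import all_boot all_order all_algebra.
From mathcomp Require Import all_classical all_reals.
From mathcomp Require Import exp trigo.
From mathcomp Require Import complex.
From mathcomp Require Import ring lra.
Import Order.TTheory GRing.Theory Num.Theory.
Local Open Scope ring_scope.
Set Implicit Arguments. Unset Strict Implicit. Unset Printing Implicit Defensive.

(* The Weyl operators [D_a] are pairwise orthogonal for the trace inner product,
   [tr (D_a^dag D_b) = d [a = b]], and complete, so for a unitary [U] and a fixed [b]
   the numbers [Dab U a b] are the squared coordinates of the unit vector
   [U D_b U^dag / sqrt d] in the orthonormal basis [D_a / sqrt d]: they lie in [[0, 1]]
   and sum to [1] over [a].  As [(1 - alpha) (x ^ alpha - x) >= 0] on [[0, 1]], with
   equality only at [0] and [1], [H_alpha U = 0] forces every [Dab U a b] into [{0, 1}].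
   If [Dab U a b = 1], equality in Cauchy-Schwarz gives [U D_b U^dag = c D_a] with
   [|c| = 1], and [c ^ dL = 1] since [D_a ^ dL = D_b ^ dL = 1], so [c] is a power of
   [omega].  Conversely a Clifford [U] maps [D_b] to a phase times a single [D_a],
   which makes every [Dab U a b] equal to [0] or [1]. *)

Local Notation "A ^*t" := (map_mx conjc (trmx A)) (at level 2, format "A ^*t").

Section Phases.
Variable R : realType.
Local Notation C := R[i].

Lemma expiD (a b : R) : expi a * expi b = expi (a + b).
Proof. by rewrite /expi cosD sinD; simpc; congr Complex; ring. Qed.

Lemma expi0 : expi (0 : R) = 1.
Proof. by rewrite /expi cos0 sin0. Qed.

Lemma expiXn (a : R) k : expi a ^+ k = expi (a *+ k).
Proof.
elim: k => [|k IHk]; first by rewrite expr0 mulr0n expi0.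
by rewrite exprS IHk expiD mulrS.
Qed.

Lemma expiJ (a : R) : (expi a)^*%C * expi a = 1.
Proof.
rewrite /expi; simpc; have := cos2Dsin2 a; rewrite !expr2 => h.
by congr Complex; [rewrite -h|]; ring.
Qed.

Lemma expi_neq1 (x : R) : 0 < x < pi *+ 2 -> expi x != 1.
Proof.
move=> /andP[x_gt0 x_lt2pi]; apply/negP => /eqP [] cosx sinx.
have [x_ltpi|x_gtpi|x_pi] := ltgtP x pi.
- by have := @sin_gt0_pi R x; rewrite x_gt0 x_ltpi sinx ltxx => /(_ isT).
- have : sin (x - pi + pi) < 0.
    rewrite sinDpi oppr_lt0; apply: sin_gt0_pi.
    by rewrite subr_gt0 x_gtpi /= ltrBlDr -mulr2n.
  by rewrite subrK sinx ltxx.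
- by move: cosx; rewrite x_pi cospi; lra.
Qed.

Variable dL : nat.
Hypothesis dL_gt1 : (1 < dL)%N.
Local Notation omega := (omega R dL).
Local Notation tau := (tau R dL).

Lemma dL_neq0 : (dL%:R : R) != 0.
Proof. by rewrite pnatr_eq0 -lt0n ltnW. Qed.

Lemma divrn_dL (x : R) : x / dL%:R *+ dL = x.
Proof. by rewrite -mulr_natr divfK ?dL_neq0. Qed.

Lemma omega_dL : omega ^+ dL = 1.
Proof. by rewrite /omega expiXn divrn_dL /expi mulr_natl cos2pi sin2pi. Qed.

(* [omega ^+ m = expi (2 pi m / dL)] with [0 < 2 pi m / dL < 2 pi] for [0 < m < dL]. *)
Lemma omega_prim : dL.-primitive_root omega.
Proof.
have [m m_prim m_dvd] := prim_order_exists (ltnW dL_gt1) omega_dL.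
have m_gt0 := prim_order_gt0 m_prim.
suff m_dL : m = dL by move: m_prim; rewrite m_dL.
apply/eqP; rewrite eqn_leq (dvdn_leq (ltnW dL_gt1) m_dvd) /= leqNgt.
apply/negP => m_lt; have := prim_expr_order m_prim.
rewrite /omega expiXn; apply/eqP/expi_neq1.
have pi_gt0 := pi_gt0 R; have dL_gt0 : (0 : R) < dL%:R by rewrite ltr0n ltnW.
apply/andP; split; first by rewrite mulrn_wgt0 // divr_gt0 // mulr_gt0.
rewrite -(mulr_natr _ m) mulrAC ltr_pdivrMr // mulr2n.
have : (m%:R : R) + 1 <= dL%:R by rewrite natr1 ler_nat.
nra.
Qed.

Lemma tau_sqr : tau ^+ 2 = omega.
Proof.
rewrite /tau sqrrN expiXn /omega; congr expi.
by rewrite -mulr_natr; field; exact: dL_neq0.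
Qed.

Lemma tau_dL : tau ^+ dL = - (-1) ^+ dL.
Proof.
rewrite /tau -(mulN1r (expi _)) exprMn expiXn divrn_dL /expi cospi sinpi.
have -> : Complex (-1) 0 = -1 :> C by apply/eqP; rewrite eq_complex /= oppr0 !eqxx.
by rewrite mulrN1.
Qed.

Lemma tauXJ e : (tau ^+ e)^*%C * tau ^+ e = 1.
Proof.
have tauJ : tau^*%C * tau = 1 by rewrite /tau rmorphN mulrNN expiJ.
by rewrite rmorphXn -exprMn tauJ expr1n.
Qed.

Lemma omegaX_tau i : omega ^+ i = tau ^+ (2 * i).
Proof. by rewrite exprM tau_sqr. Qed.

Lemma omegaX_neq0 i : omega ^+ i != 0.
Proof.
apply/eqP => h; have := tauXJ (2 * i).
by rewrite -omegaX_tau h mulr0 => /eqP; rewrite eq_sym oner_eq0.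
Qed.

Lemma omegaXJ i : (omega ^+ i)^*%C = (omega ^+ i)^-1.
Proof.
apply: (mulIf (omegaX_neq0 i)).
by rewrite mulVf ?omegaX_neq0 // omegaX_tau tauXJ.
Qed.

End Phases.

Lemma sum_prim_root_ratio (F : fieldType) N (z : F) (i j : 'I_N) :
  N.-primitive_root z -> \sum_(k < N) (z ^+ i / z ^+ j) ^+ k = (i == j)%:R * N%:R.
Proof.
move=> z_prim; have N_gt0 := prim_order_gt0 z_prim.
have zX_neq0 k : z ^+ k != 0.
  apply/expf_neq0/eqP => z0; have := prim_expr_order z_prim.
  by rewrite z0 expr0n gtn_eqF // => /eqP; rewrite eq_sym oner_eq0.
have [<-|i_neq_j] := eqVneq i j.
  under eq_bigr do rewrite divff // expr1n.
  by rewrite sumr_const card_ord mul1r.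
rewrite mul0r; set w := z ^+ i / z ^+ j.
have w_N : w ^+ N = 1.
  rewrite exprMn exprVn -!exprM !(mulnC _ N) !exprM (prim_expr_order z_prim).
  by rewrite !expr1n invr1 mulr1.
have w_neq1 : w != 1.
  apply: contra i_neq_j => /eqP/divr1_eq/eqP.
  by rewrite (eq_prim_root_expr z_prim) !modn_small.
have := subrX1 w N; rewrite w_N subrr => /esym/eqP.
by rewrite mulf_eq0 subr_eq0 (negbTE w_neq1) => /eqP.
Qed.

Section ConjugateTranspose.
Variable R : realType.
Local Notation C := R[i].

Lemma mxtrace_adj_mul m n (A B : 'M[C]_(m, n)) :
  \tr (A^*t *m B) = \sum_i \sum_j (A i j)^*%C * B i j.
Proof.
rewrite exchange_big; apply: eq_bigr => j _; rewrite !mxE.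
by apply: eq_bigr => i _; rewrite !mxE.
Qed.

Lemma adjmxK m n (A : 'M[C]_(m, n)) : A^*t^*t = A.
Proof. by apply/matrixP => i j; rewrite !mxE conjcK. Qed.

Lemma adjmxM m n p (A : 'M[C]_(m, n)) (B : 'M[C]_(n, p)) : (A *m B)^*t = B^*t *m A^*t.
Proof. by rewrite trmx_mul map_mxM. Qed.

Lemma mxtrace_adj n (A : 'M[C]_n) : \tr A^*t = (\tr A)^*%C.
Proof. by rewrite rmorph_sum; apply: eq_bigr => i _; rewrite !mxE. Qed.

Lemma mxtrace_adj_mul_eq0 m n (A : 'M[C]_(m, n)) : \tr (A^*t *m A) = 0 -> A = 0.
Proof.
have normJ_ge0 (x : C) : 0 <= x^*%C * x by rewrite mulrC mulcJ_ge0.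
rewrite mxtrace_adj_mul => trA0; apply/matrixP => i j; rewrite mxE.
have row_ge0 k : 0 <= \sum_l (A k l)^*%C * A k l by apply: sumr_ge0.
have /eqP : (A i j)^*%C * A i j = 0.
  have row_i_eq0 := psumr_eq0P (fun k _ => row_ge0 k) trA0 (i := i) isT.
  exact: (psumr_eq0P (fun l _ => normJ_ge0 _) row_i_eq0 (i := j) isT).
by rewrite mulf_eq0 conjc_eq0 orbb => /eqP.
Qed.

(* [Y - c D] has zero trace norm. *)
Lemma cauchy_schwarz_eq n (D Y : 'M[C]_n) (t c : C) :
  \tr (D^*t *m D) = t -> \tr (Y^*t *m Y) = t -> \tr (D^*t *m Y) = t * c ->
  c * c^*%C = 1 -> Y = c *: D.
Proof.
move=> trDD trYY trDY c_unit.
have t_real : t^*%C = t by rewrite -trDD -mxtrace_adj adjmxM adjmxK.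
have trYD : \tr (Y^*t *m D) = t * c^*%C.
  by rewrite -t_real -[Y]adjmxK -[D in _ *m D]adjmxK -adjmxM mxtrace_adj adjmxK trDY rmorphM.
have adj_diff : (Y - c *: D)^*t = Y^*t - c^*%C *: D^*t.
  by apply/matrixP => i j; rewrite !mxE rmorphB rmorphM.
apply/eqP; rewrite -subr_eq0; apply/eqP/mxtrace_adj_mul_eq0.
rewrite adj_diff mulmxBl !mulmxBr -!scalemxAl -!scalemxAr !linearB /= !mxtraceZ.
rewrite trDD trYY trDY trYD.
by transitivity (t * (1 - c * c^*%C)); [ring | rewrite c_unit subrr mulr0].
Qed.

End ConjugateTranspose.

Lemma prod_eq_ffun (K : comPzSemiRingType) (I : finType) (T : eqType) (x y : {ffun I -> T}) :
  \prod_i ((x i == y i)%:R : K) = (x == y)%:R.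
Proof.
have [->|x_neq_y] := eqVneq x y; first by rewrite big1 // => i _; rewrite eqxx.
have [i x_neq_y_at_i] : exists i, x i != y i.
  apply/existsP; apply: contraR x_neq_y; rewrite negb_exists => /forallP xy.
  by apply/eqP/ffunP => i; apply/eqP; rewrite -[_ == _]negbK xy.
by rewrite (bigD1 i) //= (negbTE x_neq_y_at_i) mul0r.
Qed.

Section TensorProduct.
Variables (K : comPzRingType) (dL n : nat).
Local Notation B := (basisT dL n).
Local Notation d := (Defs.dim dL n).

Definition tensmx (F : 'I_n -> 'M[K]_dL) : 'M[K]_d :=
  \matrix_(i, j) \prod_(l < n) F l ((enum_val i : B) l) ((enum_val j : B) l).

Lemma sum_enum_val (G : B -> K) : \sum_(i < d) G (enum_val i) = \sum_(x : B) G x.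
Proof. by rewrite -(big_enum_val G). Qed.

Lemma tensmx_mul F G : tensmx F *m tensmx G = tensmx (fun l => F l *m G l).
Proof.
apply/matrixP => i j; rewrite !mxE; under eq_bigr do rewrite !mxE -big_split /=.
rewrite (sum_enum_val (fun x => \prod_l (F l _ (x l) * G l (x l) _))).
by under [RHS]eq_bigr do rewrite mxE; rewrite bigA_distr_bigA.
Qed.

Lemma mxtrace_tensmx F : \tr (tensmx F) = \prod_l \tr (F l).
Proof.
rewrite /mxtrace (eq_bigr (fun i => \prod_l F l ((enum_val i : B) l) ((enum_val i : B) l))).
  by rewrite (sum_enum_val (fun x => \prod_l F l (x l) (x l))) bigA_distr_bigA.
by move=> i _; rewrite mxE.
Qed.

Lemma tensmx1 : tensmx (fun=> 1%:M) = 1%:M.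
Proof.
apply/matrixP => i j; rewrite !mxE.
under eq_bigr do rewrite mxE.
by rewrite prod_eq_ffun (inj_eq enum_val_inj).
Qed.

Lemma tensmxX F k : tensmx F ^+ k = tensmx (fun l => F l ^+ k).
Proof.
elim: k => [|k IHk]; first by rewrite expr0 -idmxE -tensmx1.
rewrite exprS IHk -[LHS]/(_ *m _) tensmx_mul.
by congr tensmx; apply/funext => l; rewrite exprS.
Qed.

End TensorProduct.

Lemma adjmx_tensmx (R : realType) dL n (F : 'I_n -> 'M[R[i]]_dL) :
  (tensmx F)^*t = tensmx (fun l => (F l)^*t).
Proof.
apply/matrixP => i j; rewrite !mxE rmorph_prod.
by apply: eq_bigr => l _; rewrite !mxE.
Qed.

Section Weyl.
Variables (R : realType) (dL : nat).
Hypothesis dL_gt1 : (1 < dL)%N.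
Local Notation C := R[i].
Local Notation omega := (omega R dL).
Local Notation tau := (tau R dL).

Definition weyl1 (a : 'I_dL * 'I_dL) : 'M[C]_dL := \matrix_(j, k) D1 R a j k.

Lemma ltn_mod_dL m : (m %% dL < dL)%N.
Proof. by rewrite ltn_pmod // ltnW. Qed.

Lemma sum_ord_eq_nat t (t_lt : (t < dL)%N) (F : 'I_dL -> C) :
  \sum_(j < dL) ((j : nat) == t)%:R * F j = F (Ordinal t_lt).
Proof.
rewrite (bigD1 (Ordinal t_lt)) //= eqxx mul1r big1 ?addr0 // => j.
by rewrite -val_eqE /= => /negbTE ->; rewrite mul0r.
Qed.

Lemma sum_omegaX_mulJ (i j : 'I_dL) :
  \sum_(k < dL) (omega ^+ i) ^+ k * ((omega ^+ j) ^+ k)^*%C = (i == j)%:R * dL%:R.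
Proof.
rewrite -(sum_prim_root_ratio i j (omega_prim R dL_gt1)).
by apply: eq_bigr => k _; rewrite rmorphXn /= omegaXJ // exprMn.
Qed.

Lemma weyl1_orthogonal a b : \tr ((weyl1 a)^*t *m weyl1 b) = (a == b)%:R * dL%:R.
Proof.
rewrite mxtrace_adj_mul exchange_big /=.
under eq_bigr => k _.
  under eq_bigr => j _.
    rewrite !mxE /D1 !rmorphM /= conjc_nat.
    rewrite [X in X * _]mulrC -mulrA [X in _ * X]mulrC -!mulrA.
    over.
  rewrite /= (sum_ord_eq_nat (ltn_mod_dL _)) /= mulrA.
  over.
case: a b => a1 a2 [b1 b2] /=; rewrite xpair_eqE.
have [<-|a1_neq_b1] := eqVneq a1 b1; last first.
  rewrite big1 ?mul0r // => k _; rewrite eqn_modDl !modn_small ?ltn_ord //.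
  by rewrite (negbTE a1_neq_b1 : (a1 == b1 :> nat) = false) mul0r !mulr0.
rewrite /= (eq_bigr (fun k : 'I_dL => ((tau ^+ (a1 * a2))^*%C * tau ^+ (a1 * b2)) *
            ((omega ^+ b2) ^+ k * ((omega ^+ a2) ^+ k)^*%C))); last first.
  by move=> k _; rewrite eqxx (exprM omega b2 k) (exprM omega a2 k) /=; ring.
rewrite -mulr_sumr sum_omegaX_mulJ.
have [<-|b2_neq_a2] := eqVneq b2 a2; first by rewrite tauXJ mul1r.
by rewrite !mul0r mulr0.
Qed.

Lemma shift_eq_mod (j k a1 : 'I_dL) :
  ((j : nat) == (k + a1) %% dL)%N = ((a1 : nat) == (j + (dL - k)) %% dL)%N.
Proof.
have k_le : (k <= dL)%N by apply: ltnW.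
apply/eqP/eqP => ->.
  rewrite modnDml (_ : (k + a1 + (dL - k) = a1 + dL)%N); last first.
    by rewrite addnAC subnKC // addnC.
  by rewrite modnDr modn_small.
by rewrite modnDmr addnCA (addnC j) subnKC // modnDl modn_small.
Qed.

Lemma weyl1_complete (j k j' k' : 'I_dL) :
  \sum_(a : 'I_dL * 'I_dL) D1 R a j k * (D1 R a j' k')^*%C
    = ((j == j') && (k == k'))%:R * dL%:R.
Proof.
rewrite -(pair_bigA _ (fun a1 a2 => D1 R (a1, a2) j k * (D1 R (a1, a2) j' k')^*%C)) /=.
rewrite (eq_bigr (fun a1 : 'I_dL => ((j : nat) == (k + a1) %% dL)%N%:R *
    ((j' : nat) == (k' + a1) %% dL)%N%:R *
    \sum_(a2 < dL) (omega ^+ k) ^+ a2 * ((omega ^+ k') ^+ a2)^*%C)); last first.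
  move=> a1 _; rewrite mulr_sumr; apply: eq_bigr => a2 _.
  rewrite /D1 /= !rmorphM /= conjc_nat -!exprM (mulnC k) (mulnC k').
  have := tauXJ R dL (a1 * a2); set T := tau ^+ _ => TJ.
  by rewrite -[X in _ = X]mul1r -TJ; ring.
under eq_bigr do rewrite sum_omegaX_mulJ.
have [<-|k_neq_k'] := eqVneq k k'; last first.
  by rewrite andbF mul0r big1 // => a1 _; rewrite mulr0.
rewrite andbT -mulr_suml mul1r; congr (_ * _).
under eq_bigr do rewrite shift_eq_mod.
rewrite (sum_ord_eq_nat (ltn_mod_dL _)) /=; congr (_%:R).
have k_le : (k <= dL)%N by apply: ltnW.
by rewrite modnDmr addnCA (addnC j) subnKC // modnDl modn_small // eq_sym.
Qed.

Lemma weyl1X a k (s t : 'I_dL) :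
  (weyl1 a ^+ k) s t =
  tau ^+ (a.1 * a.2 * (k * k) + 2 * k * a.2 * t)%N * ((s : nat) == (t + k * a.1) %% dL)%N%:R.
Proof.
elim: k s t => [|k IHk] s t.
  by rewrite expr0 mxE !muln0 !mul0n !addn0 modn_small // expr0 mul1r.
rewrite exprS mxE; under eq_bigr do rewrite IHk !mxE /D1 mulrA [_ * (_ == _)%:R]mulrC.
rewrite (sum_ord_eq_nat (ltn_mod_dL _)) /= modnDml -addnA -mulSnr mulrAC; congr (_ * _).
rewrite (mulnC a.2) (exprM omega) prim_expr_mod ?(omega_prim R dL_gt1) //.
by rewrite -exprM omegaX_tau // -!exprD; congr (_ ^+ _); ring.
Qed.

(* [tau ^+ dL = (-1) ^+ dL.+1], and [dL.+1 * (a.1 * a.2 * dL + 2 * a.2 * t)] is even. *)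
Lemma weyl1X_dL a : weyl1 a ^+ dL = 1.
Proof.
apply/matrixP => s t; rewrite weyl1X mxE (addnC t) (mulnC dL a.1) modnMDl modn_small //.
have -> : (a.1 * a.2 * (dL * dL) + 2 * dL * a.2 * t = dL * (a.1 * a.2 * dL + 2 * a.2 * t))%N.
  by ring.
rewrite exprM tau_dL // -mulN1r -exprS -exprM -signr_odd oddM oddD !oddM /=.
by case: (odd dL); rewrite ?andbF expr0 mul1r.
Qed.

Variable n : nat.
Local Notation d := (Defs.dim dL n).
Local Notation B := (basisT dL n).
Local Notation P := (phaseT dL n).

Lemma card_basisT : #|{: B}| = (dL ^ n)%N.
Proof. by rewrite card_ffun !card_ord. Qed.

Lemma Dop_tensmx (a : P) : Dop R a = tensmx (fun l => weyl1 (a l)).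
Proof. by apply/matrixP => i j; rewrite !mxE; apply: eq_bigr => l _; rewrite mxE. Qed.

Lemma Dop_orthogonal (a b : P) : \tr ((Dop R a)^*t *m Dop R b) = (a == b)%:R * d%:R.
Proof.
rewrite !Dop_tensmx adjmx_tensmx tensmx_mul mxtrace_tensmx.
under eq_bigr do rewrite weyl1_orthogonal.
by rewrite big_split /= prod_eq_ffun prodr_const card_ord /Defs.dim card_basisT natrX.
Qed.

Lemma Dop_complete (x y x' y' : 'I_d) :
  \sum_(a : P) Dop R a x y * (Dop R a x' y')^*%C
    = ((x == x') && (y == y'))%:R * d%:R.
Proof.
under eq_bigr do rewrite !mxE rmorph_prod -big_split /=.
rewrite -(bigA_distr_bigA (fun l (p : 'I_dL * 'I_dL) =>
  D1 R p ((enum_val x : B) l) ((enum_val y : B) l) *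
  (D1 R p ((enum_val x' : B) l) ((enum_val y' : B) l))^*%C)).
under eq_bigr do rewrite weyl1_complete -mulnb natrM.
rewrite !big_split /= !prod_eq_ffun prodr_const card_ord !(inj_eq enum_val_inj).
have -> : (d%:R : C) = dL%:R ^+ n by rewrite /Defs.dim card_basisT natrX.
by rewrite -natrM mulnb.
Qed.

Lemma DopX_dL (a : P) : Dop R a ^+ dL = 1.
Proof.
rewrite Dop_tensmx tensmxX -[RHS]tensmx1.
by congr tensmx; apply/funext => l; rewrite weyl1X_dL.
Qed.

End Weyl.

Lemma scalemxX (K : comPzRingType) m (c : K) (A : 'M[K]_m) k :
  (c *: A) ^+ k = c ^+ k *: A ^+ k.
Proof.
elim: k => [|k IHk]; first by rewrite !expr0 scale1r.
rewrite !exprS IHk -[LHS]/(_ *m _) -[A * _]/(A *m _).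
by rewrite -scalemxAl -scalemxAr scalerA.
Qed.

Section CliffordCharacteristic.
Variables (R : realType) (dL n : nat).
Hypothesis dL_gt1 : (1 < dL)%N.
Local Notation C := R[i].
Local Notation d := (Defs.dim dL n).
Local Notation P := (phaseT dL n).
Local Notation M := (Mat R dL n).

Lemma dim_gt0 : (0 < d)%N.
Proof. by rewrite /Defs.dim card_basisT expn_gt0 ltnW. Qed.

Lemma dim_neq0 : (d%:R : C) != 0.
Proof. by rewrite pnatr_eq0 -lt0n dim_gt0. Qed.

Lemma card_phaseT : #|{: P}| = (d ^ 2)%N.
Proof. by rewrite card_ffun card_prod !card_ord /Defs.dim card_basisT expnMn mulnn. Qed.

Lemma weyl_parseval (A : M) :
  \sum_(a : P) \tr ((Dop R a)^*t *m A) * (\tr ((Dop R a)^*t *m A))^*%C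
    = d%:R * \tr (A^*t *m A).
Proof.
have trE (X : M) : \tr (X^*t *m A) = \sum_(p : 'I_d * 'I_d) (X p.1 p.2)^*%C * A p.1 p.2.
  by rewrite mxtrace_adj_mul pair_bigA.
under eq_bigr do rewrite trE rmorph_sum mulr_suml.
rewrite trE exchange_big mulr_sumr; apply: eq_bigr => p _ /=.
under eq_bigr do rewrite mulr_sumr.
rewrite exchange_big (bigD1 p) //= [X in _ + X]big1 ?addr0 => [|q q_neq_p].
  rewrite (eq_bigr (fun a : P => A p.1 p.2 * (A p.1 p.2)^*%C *
      (Dop R a p.1 p.2 * (Dop R a p.1 p.2)^*%C))); last first.
    by move=> a _; rewrite rmorphM /= conjcK; ring.
  by rewrite -mulr_sumr Dop_complete // !eqxx mul1r mulrC [_ * A _ _]mulrC.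
rewrite (eq_bigr (fun a : P => A p.1 p.2 * (A q.1 q.2)^*%C *
    (Dop R a q.1 q.2 * (Dop R a p.1 p.2)^*%C))); last first.
  by move=> a _; rewrite rmorphM /= conjcK; ring.
rewrite -mulr_sumr Dop_complete // -xpair_eqE -!surjective_pairing.
by rewrite (negbTE q_neq_p) mul0r mulr0.
Qed.

Section Unitary.
Variable U : M.
Hypothesis U_unitary : unitary U.

Lemma unitary_adj_mul : adj U *m U = 1%:M.
Proof. exact: mulmx1C. Qed.

Lemma mxtrace_conj_unitary (X : M) : \tr (U *m X *m adj U) = \tr X.
Proof. by rewrite mxtrace_mulC mulmxA unitary_adj_mul mul1mx. Qed.

Lemma conj_unitaryX (X : M) k : (U *m X *m adj U) ^+ k = U *m X ^+ k *m adj U.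
Proof.
elim: k => [|k IHk]; first by rewrite !expr0 -idmxE mulmx1 U_unitary.
rewrite exprS IHk exprS -!mulmxE !mulmxA; congr (_ *m _).
by rewrite -(mulmxA _ (adj U) U) unitary_adj_mul mulmx1.
Qed.

Lemma Cab_conj_Dop a b :
  Cab U a b = d%:R^-1 * \tr ((Dop R a)^*t *m (U *m Dop R b *m adj U)).
Proof. by rewrite /Cab !mulmxA. Qed.

Lemma mxtrace_adj_mul_conj_Dop b :
  \tr ((U *m Dop R b *m adj U)^*t *m (U *m Dop R b *m adj U)) = d%:R.
Proof.
rewrite !adjmxM adjmxK -!mulmxA (mulmxA (adj U) U) unitary_adj_mul mul1mx.
by rewrite (mulmxA _ (Dop R b)) mulmxA mxtrace_conj_unitary Dop_orthogonal // (eqxx b) mul1r.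
Qed.

Lemma Dab_complex a b : real_complex R (Dab U a b) = Cab U a b * (Cab U a b)^*%C.
Proof. by rewrite -sqr_normc rmorphXn. Qed.

Lemma sum_Dab b : \sum_(a : P) Dab U a b = 1.
Proof.
apply: (@complexI R); rewrite rmorph_sum /=.
under eq_bigr do rewrite Dab_complex Cab_conj_Dop rmorphM /= conjc_inv conjc_nat mulrACA.
rewrite -mulr_sumr weyl_parseval mxtrace_adj_mul_conj_Dop.
by field; rewrite dim_neq0.
Qed.

Lemma Dab_ge0 a b : 0 <= Dab U a b.
Proof. exact: sqr_ge0. Qed.

Lemma Dab_le1 a b : Dab U a b <= 1.
Proof.
rewrite -(sum_Dab b) (bigD1 a) //= lerDl.
by apply: sumr_ge0 => a' _; apply: Dab_ge0.
Qed.

Lemma sum_sum_Dab : \sum_(a : P) \sum_(b : P) Dab U a b = d%:R ^+ 2.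
Proof.
rewrite exchange_big; under eq_bigr do rewrite sum_Dab.
by rewrite sumr_const card_phaseT natrX.
Qed.

Lemma Dab_eq1_conj_Dop a b : Dab U a b = 1 ->
  exists s : 'I_dL, U *m Dop R b *m adj U = omega R dL ^+ s *: Dop R a.
Proof.
move=> Dab1; set c := Cab U a b.
have c_unit : c * c^*%C = 1 by rewrite -Dab_complex Dab1.
have conj_Dop : U *m Dop R b *m adj U = c *: Dop R a.
  apply: (cauchy_schwarz_eq (t := d%:R)); rewrite ?Dop_orthogonal ?eqxx ?mul1r //.
    exact: mxtrace_adj_mul_conj_Dop.
  by rewrite /c Cab_conj_Dop mulrA divff ?mul1r ?dim_neq0.
have c_dL : c ^+ dL = 1.
  have := conj_unitaryX (Dop R b) dL; rewrite DopX_dL // -idmxE mulmx1 U_unitary.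
  rewrite conj_Dop scalemxX DopX_dL // => /matrixP /(_ (Ordinal dim_gt0) (Ordinal dim_gt0)).
  by rewrite !mxE eqxx mulr1 => ->.
have [s c_omegaX] := prim_rootP (omega_prim R dL_gt1) c_dL.
by exists s; rewrite -c_omegaX.
Qed.

Lemma clifford_of_Dab01 : (forall a b, Dab U a b = 0 \/ Dab U a b = 1) -> clifford U.
Proof.
move=> Dab01; split=> // b.
have [a Dab1] : exists a, Dab U a b = 1.
  apply/not_existsP => Dab_neq1; have := sum_Dab b.
  rewrite big1 => [/eqP|a _]; first by rewrite eq_sym oner_eq0.
  by have [|/Dab_neq1] := Dab01 a b.
by have [s conj_Dop] := Dab_eq1_conj_Dop Dab1; exists s, a.
Qed.

End Unitary.

Lemma clifford_Dab01 (U : M) a b : clifford U -> Dab U a b = 0 \/ Dab U a b = 1.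
Proof.
move=> [U_unitary U_clifford]; have [s [a' conj_Dop]] := U_clifford b.
have Cab_eq : Cab U a b = omega R dL ^+ s * (a == a')%:R.
  rewrite Cab_conj_Dop conj_Dop -scalemxAr mxtraceZ Dop_orthogonal // mulrCA.
  by rewrite [_ * d%:R]mulrC mulKf ?dim_neq0.
have := Dab_complex U a b; rewrite Cab_eq.
case: (a == a') => Dab_eq; [right | left]; apply: (@complexI R); rewrite Dab_eq.
  by rewrite !mulr1 omegaXJ // mulfV ?omegaX_neq0.
by rewrite !mulr0 mul0r.
Qed.

End CliffordCharacteristic.

Section PowerFixedPoints.
Variables (R : realType) (alpha : R).
Hypothesis alpha_gt0 : 0 < alpha.

Lemma powR_sub_mul_ge0 (x : R) : 0 <= x <= 1 -> 0 <= (1 - alpha) * (x `^ alpha - x).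
Proof.
case/andP; rewrite le0r => /orP[/eqP->|x_gt0 x_le1].
  by rewrite powR0 ?gt_eqF // subrr mulr0.
have x01 : 0 < x <= 1 by rewrite x_gt0.
have [alpha_le1|alpha_ge1] := lerP alpha 1.
  by rewrite mulr_ge0 // subr_ge0 // ger1_powR.
by apply: mulr_le0; rewrite subr_le0; [exact: ltW | exact: ge1r_powR (ltW _)].
Qed.

Lemma powR_eq_id (x : R) : alpha != 1 -> 0 < x -> x `^ alpha = x -> x = 1.
Proof.
move=> alpha_neq1 x_gt0 x_fixed; apply/eqP/negPn/negP => x_neq1.
have : x `^ (alpha - 1) == 1.
  rewrite powRB; last by rewrite (gt_eqF x_gt0) implybT.
  by rewrite x_fixed (powRr1 (ltW x_gt0)) divff // gt_eqF.
by rewrite powR_eq1 (negbTE x_neq1) ltNge (ltW x_gt0) /= subr_eq0 (negbTE alpha_neq1).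
Qed.

Lemma sum_powR_eq_sum (I : finType) (x : I -> R) :
  alpha != 1 -> (forall i, 0 <= x i <= 1) ->
  \sum_i x i `^ alpha = \sum_i x i -> forall i, x i = 0 \/ x i = 1.
Proof.
move=> alpha_neq1 x01 sum_eq i.
have term_eq0 := psumr_eq0P (fun j _ => powR_sub_mul_ge0 (x01 j)).
have /term_eq0 /(_ i isT) /eqP : \sum_j (1 - alpha) * (x j `^ alpha - x j) = 0.
  by rewrite -mulr_sumr sumrB sum_eq subrr mulr0.
rewrite mulf_eq0 subr_eq0 eq_sym (negbTE alpha_neq1) subr_eq0 /= => /eqP x_fixed.
have [x_eq0|x_neq0] := eqVneq (x i) 0; [left | right] => //.
by apply: (powR_eq_id alpha_neq1 _ x_fixed); rewrite lt_def x_neq0; case/andP: (x01 i).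
Qed.

End PowerFixedPoints.

Lemma Halpha_eq0 (R : realType) dL n (alpha : R) (U : Mat R dL n) :
  (1 < dL)%N -> alpha != 1 ->
  Halpha alpha U = 0 <-> \sum_a \sum_b Dab U a b `^ alpha = (Defs.dim dL n)%:R ^+ 2.
Proof.
move=> dL_gt1 alpha_neq1.
have dim2_neq0 : ((Defs.dim dL n)%:R ^+ 2 : R) != 0.
  by rewrite expf_neq0 // pnatr_eq0 -lt0n dim_gt0.
rewrite /Halpha; split => [/eqP | ->]; last by rewrite mulVf // subrr mulr0.
rewrite mulf_eq0 invr_eq0 subr_eq0 (negbTE alpha_neq1) /= subr_eq0 => /eqP one_eq.
by apply: (mulfI (invr_neq0 dim2_neq0)); rewrite -one_eq mulVf.
Qed.

Theorem theorem1 (R : realType) (dL n : nat) (hdL : (2 <= dL)%N) (hn : (1 <= n)%N)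
  (alpha : R) (halpha0 : 0 < alpha) (halpha1 : alpha != 1)
  (U : Mat R dL n) (hU : unitary U) :
  Halpha alpha U = 0 <-> clifford U.
Proof.
rewrite Halpha_eq0 // -(sum_sum_Dab hdL hU) !pair_bigA /=.
split => [sum_eq | /(clifford_Dab01 hdL) Dab01].
  apply: clifford_of_Dab01 => // a b.
  have Dab_in01 p : 0 <= Dab U p.1 p.2 <= 1 by rewrite Dab_ge0 Dab_le1.
  exact: (sum_powR_eq_sum halpha0 halpha1 Dab_in01 sum_eq (a, b)).
apply: eq_bigr => p _.
by case: (Dab01 p.1 p.2) => ->; rewrite ?powR1 // powR0 // gt_eqF.
Qed.
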